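(* Let $H$ be a separable complex Hilbert space, $(\Omega,\mu)$ a measure space with positive measure, let $K\in B(H)$ have closed range, let $F:\Omega\to H$ be a Parseval continuous $K$-frame of $H$, and let $\tilde F(\omega)=K^{\dagger}F(\omega)$ be its canonical dual continuous $K$-Bessel sequence. Then: (1) $F$ is continuous $L^2$-independent if and only if $\tilde F$ is continuous $L^2$-independent; (2) if $F$ admits a unique dual continuous $K$-Bessel sequence, then $\tilde F$ admits a unique dual continuous $K^{\ast}$-Bessel sequence.
   Context: A map $F:\Omega\to H$ is weakly measurable if $\omega\mapsto\langle f,F(\omega)\rangle$ is measurable for every $f\in H$. A continuous Bessel sequence is a weakly measurable $G$ with $\int_\Omega|\langle f,G(\omega)\rangle|^2\,d\mu(\omega)\le B\|f\|^2$ for all $f\in H$, for some $B>0$. A Parseval continuous $K$-frame is a weakly measurable $F$ with $\int_\Omega|\langle f,F(\omega)\rangle|^2\,d\mu(\omega)=\|K^{\ast}f\|^2$ for all $f\in H$. For $L\in B(H)$ and a map $E:\Omega\to H$, a dual continuous $L$-Bessel sequence of $E$ is a continuous Bessel sequence $G$ with $Lf=\int_\Omega\langle f,G(\omega)\rangle E(\omega)\,d\mu(\omega)$ for all $f\in H$. A continuous Bessel mapping $E$ is (continuous) $L^2$-independent if $\int_\Omega\phi(\omega)E(\omega)\,d\mu(\omega)=0$ with $\phi\in L^2(\Omega,\mu)$ implies $\phi=0$ a.e. $K^{\dagger}$ is the Moore–Penrose pseudo-inverse of $K$; the canonical dual continuous $K$-Bessel sequence of $F$ is $K^{\dagger}F$.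 *)

From HB Require Import structures.
From mathcomp Require Import all_boot all_order all_algebra.
From mathcomp Require Import all_classical all_reals all_analysis.
From mathcomp Require Import complex.
Set Implicit Arguments.
Unset Strict Implicit.
Unset Printing Implicit Defensive.
Import Order.TTheory GRing.Theory Num.Theory.
Local Open Scope classical_set_scope.
Local Open Scope ring_scope.

(* Complex Hilbert spaces, given concretely by an inner product on a   *)
(* left module over C = R[i].  Convention: <x, y> is linear in x and  *)
(* conjugate-linear in y.                                             *)
Section Hilbert.
Variables (R : realType) (H : lmodType R[i]) (ip : H -> H -> R[i]).

Definition is_inner_product : Prop :=
  [/\ (forall (a : R[i]) (x y z : H), ip (a *: x + y) z = a * ip x z + ip y z),
      (forall x y : H, ip y x = conjc (ip x y)),
      (forall x : H, complex.Im (ip x x) = 0 /\ 0 <= complex.Re (ip x x)) &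
      (forall x : H, ip x x = 0 -> x = 0)].

Definition hnorm (x : H) : R := Num.sqrt (complex.Re (ip x x)).

Definition hconverges (u : nat -> H) (l : H) : Prop :=
  forall e : R, 0 < e -> exists N : nat, forall n, (N <= n)%N -> hnorm (u n - l) < e.

Definition hcauchy (u : nat -> H) : Prop :=
  forall e : R, 0 < e -> exists N : nat,
    forall m n, (N <= m)%N -> (N <= n)%N -> hnorm (u m - u n) < e.

Definition hcomplete : Prop :=
  forall u : nat -> H, hcauchy u -> exists l, hconverges u l.

Definition hseparable : Prop :=
  exists d : nat -> H, forall (x : H) (e : R), 0 < e -> exists n, hnorm (x - d n) < e.

Definition separable_hilbert_space : Prop :=
  [/\ is_inner_product, hcomplete & hseparable].

Definition bounded_op (A : H -> H) : Prop :=
  (forall (a : R[i]) (x y : H), A (a *: x + y) = a *: A x + A y) /\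
  (exists M : R, forall x, hnorm (A x) <= M * hnorm x).

Definition is_adjoint (A As : H -> H) : Prop :=
  forall x y : H, ip (A x) y = ip x (As y).

Definition closed_range (A : H -> H) : Prop :=
  forall (u : nat -> H) (y : H), hconverges (fun n => A (u n)) y ->
    exists x, A x = y.

Definition selfadjoint (A : H -> H) : Prop := is_adjoint A A.

Definition is_MP_inverse (A Ad : H -> H) : Prop :=
  [/\ bounded_op Ad,
      (forall x, A (Ad (A x)) = A x),
      (forall x, Ad (A (Ad x)) = Ad x),
      selfadjoint (A \o Ad) &
      selfadjoint (Ad \o A)].
End Hilbert.

Section Cmeasure.
Context {d : measure_display} {T : measurableType d} {R : realType}.
Variable mu : {measure set T -> \bar R}.

Definition cmeasurable (g : T -> R[i]) : Prop :=
  measurable_fun setT (fun w => complex.Re (g w)) /\ measurable_fun setT (fun w => complex.Im (g w)).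

Definition cintegral (g : T -> R[i]) : R[i] :=
  Complex (Rintegral mu setT (fun w => complex.Re (g w)))
          (Rintegral mu setT (fun w => complex.Im (g w))).

Definition csq_integral (g : T -> R[i]) : \bar R :=
  (\int[mu]_w (complex.Re (g w) ^+ 2 + complex.Im (g w) ^+ 2)%:E)%E.

Definition L2c (g : T -> R[i]) : Prop :=
  cmeasurable g /\ (csq_integral g < +oo)%E.

Variables (H : lmodType R[i]) (ip : H -> H -> R[i]).

Definition weakly_measurable (E : T -> H) : Prop :=
  forall f : H, cmeasurable (fun w => ip f (E w)).

Definition cont_bessel (G : T -> H) : Prop :=
  weakly_measurable G /\
  exists B : R, 0 < B /\
    forall f : H, (csq_integral (fun w => ip f (G w)) <= (B * hnorm ip f ^+ 2)%:E)%E.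

(* F is a Parseval continuous K-frame, Ks being the adjoint K^* *)
Definition parseval_cont_Kframe (Ks : H -> H) (F : T -> H) : Prop :=
  weakly_measurable F /\
  forall f : H, csq_integral (fun w => ip f (F w)) = ((hnorm ip (Ks f)) ^+ 2)%:E.

(* G is a dual continuous L-Bessel sequence of E:
   L f = \int <f, G w> E w dmu (weakly), i.e.
   <L f, h> = \int <f, G w> <E w, h> dmu for all h *)
Definition dual_cont_bessel (L : H -> H) (E G : T -> H) : Prop :=
  cont_bessel G /\
  forall f h : H, ip (L f) h = cintegral (fun w => ip f (G w) * ip (E w) h).

Definition unique_dual_cont_bessel (L : H -> H) (E : T -> H) : Prop :=
  (exists G, dual_cont_bessel L E G) /\
  forall G1 G2, dual_cont_bessel L E G1 -> dual_cont_bessel L E G2 ->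
    {ae mu, forall w, G1 w = G2 w}.

Definition cont_L2_independent (E : T -> H) : Prop :=
  forall phi : T -> R[i], L2c phi ->
    (forall h : H, cintegral (fun w => phi w * ip (E w) h) = 0) ->
    {ae mu, forall w, phi w = 0}.
End Cmeasure.

(* The Penrose equations give two facts about the Parseval K-frame F.  First,
   almost every F w lies weakly in the range of K: <F w, g> = <F w, K K^+ g> a.e.,
   because K^* annihilates g - K K^+ g and F is Parseval for K^*.  Second,
   <K^+ x, K^* h> = <x, K K^+ h>.  Together they turn <F w, h> into
   <K^+ F w, K^* h> under the integral, so the synthesis conditions for F and for
   K^+ F correspond, which gives (1).  For (2), polarising the Parseval identity
   shows that F is a dual K^*-Bessel sequence of K^+ F; and if G1, G2 are two
   such duals, adding G1 - G2 to the unique dual G of F gives another dual of F,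
   so G1 = G2 a.e.  Moving K^+ across the inner product needs its adjoint, which
   exists by the Riesz representation theorem: the minimal-norm point of the
   hyperplane phi = 1 is orthogonal to ker phi. *)

From HB Require Import structures.
From mathcomp Require Import all_boot all_order all_algebra.
From mathcomp Require Import all_classical all_reals all_analysis.
From mathcomp Require Import complex.
From mathcomp Require Import ring lra.
From mathcomp Require Import measurable_realfun.
Import Order.TTheory GRing.Theory Num.Theory.
Local Open Scope classical_set_scope.
Local Open Scope ring_scope.
Local Open Scope complex_scope.
Set Implicit Arguments.
Unset Strict Implicit.
Unset Printing Implicit Defensive.

Section ComplexParts.
Variable R : realType.
Local Notation Re := complex.Re.
Local Notation Im := complex.Im.
Implicit Types (x y : R[i]) (r : R).

Lemma cReD x y : Re (x + y) = Re x + Re y. Proof. by case: x y => a b [c d]. Qed.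
Lemma cImD x y : Im (x + y) = Im x + Im y. Proof. by case: x y => a b [c d]. Qed.
Lemma cReN x : Re (- x) = - Re x. Proof. by case: x. Qed.
Lemma cImN x : Im (- x) = - Im x. Proof. by case: x. Qed.
Lemma cReM x y : Re (x * y) = Re x * Re y - Im x * Im y.
Proof. by case: x y => a b [c d]. Qed.
Lemma cImM x y : Im (x * y) = Re x * Im y + Im x * Re y.
Proof. by case: x y => a b [c d]. Qed.
Lemma cReJ x : Re x^* = Re x. Proof. by case: x. Qed.
Lemma cImJ x : Im x^* = - Im x. Proof. by case: x. Qed.
Lemma cReC r : Re r%:C = r. Proof. by []. Qed.
Lemma cImC r : Im r%:C = 0. Proof. by []. Qed.
Lemma cRei : Re 'i = 0 :> R. Proof. by []. Qed.
Lemma cImi : Im 'i = 1 :> R. Proof. by []. Qed.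

Lemma complexP x y : Re x = Re y -> Im x = Im y -> x = y.
Proof. by case: x y => a b [c d] /= -> ->. Qed.

Definition sqnormc x : R := Re x ^+ 2 + Im x ^+ 2.

Lemma sqnormc_ge0 x : 0 <= sqnormc x.
Proof. by rewrite addr_ge0 ?sqr_ge0. Qed.

Lemma sqnormc_eq0 x : sqnormc x = 0 -> x = 0.
Proof. by case: x => a b; rewrite /sqnormc /= => h; apply: complexP => /=; nra. Qed.

Lemma sqnormcN x : sqnormc (- x) = sqnormc x.
Proof. by rewrite /sqnormc cReN cImN !sqrrN. Qed.

Lemma sqnormcD_le x y : sqnormc (x + y) <= 2 * sqnormc x + 2 * sqnormc y.
Proof.
rewrite /sqnormc cReD cImD.
have := sqr_ge0 (Re x - Re y); have := sqr_ge0 (Im x - Im y); nra.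
Qed.

Lemma cReM_le x y : `|Re (x * y)| <= sqnormc x + sqnormc y.
Proof.
rewrite /sqnormc cReM ler_norml; apply/andP; split;
have := sqr_ge0 (Re x - Re y); have := sqr_ge0 (Im x + Im y);
have := sqr_ge0 (Re x + Re y); have := sqr_ge0 (Im x - Im y); nra.
Qed.

Lemma cImM_le x y : `|Im (x * y)| <= sqnormc x + sqnormc y.
Proof.
rewrite /sqnormc cImM ler_norml; apply/andP; split;
have := sqr_ge0 (Re x - Im y); have := sqr_ge0 (Im x - Re y);
have := sqr_ge0 (Re x + Im y); have := sqr_ge0 (Im x + Re y); nra.
Qed.

Lemma cReMJ_polar x y :
  Re (x * y^*) = 4^-1 * (sqnormc (x + y) - sqnormc (x - y)).
Proof. by rewrite /sqnormc !(cReM, cImM, cReD, cImD, cReN, cImN, cReJ, cImJ); field. Qed.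

Lemma cRe_mulJi x : Re ('i^* * x) = Im x.
Proof. by rewrite cReM cReJ cImJ cRei cImi; ring. Qed.

End ComplexParts.

Definition cpartsE := (cReD, cImD, cReN, cImN, cReM, cImM, cReJ, cImJ, cReC, cImC, cRei, cImi).

Section LinearFacts.
Variables (K : pzRingType) (V W : lmodType K) (f : V -> W).
Hypothesis f_lin : forall a x y, f (a *: x + y) = a *: f x + f y.

Lemma lin0 : f 0 = 0.
Proof.
have h := f_lin 1 0 0; rewrite !scale1r addr0 in h.
by apply: (addrI (f 0)); rewrite addr0 -h.
Qed.
Lemma linD x y : f (x + y) = f x + f y. Proof. by rewrite -[x]scale1r f_lin !scale1r. Qed.
Lemma linZ a x : f (a *: x) = a *: f x. Proof. by rewrite -[a *: x]addr0 f_lin lin0 addr0. Qed.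
Lemma linN x : f (- x) = - f x. Proof. by rewrite -scaleN1r linZ scaleN1r. Qed.
Lemma linB x y : f (x - y) = f x - f y. Proof. by rewrite linD linN. Qed.
End LinearFacts.

Section ScalarLinearFacts.
Variables (K : pzRingType) (V : lmodType K) (f : V -> K).
Hypothesis f_lin : forall a x y, f (a *: x + y) = a * f x + f y.

Lemma scal0 : f 0 = 0. Proof. exact: (@lin0 _ _ K^o _ f_lin). Qed.
Lemma scalD x y : f (x + y) = f x + f y. Proof. exact: (@linD _ _ K^o _ f_lin). Qed.
Lemma scalZ a x : f (a *: x) = a * f x. Proof. exact: (@linZ _ _ K^o _ f_lin). Qed.
Lemma scalB x y : f (x - y) = f x - f y. Proof. exact: (@linB _ _ K^o _ f_lin). Qed.
End ScalarLinearFacts.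

Section InnerProduct.
Variables (R : realType) (H : lmodType R[i]) (ip : H -> H -> R[i]).
Hypothesis hip : is_inner_product ip.
Local Notation Re := complex.Re.
Local Notation hnorm := (hnorm ip).
Implicit Types (x y z : H) (a : R[i]).

Definition hnorm2 x : R := Re (ip x x).

Lemma ipJ x y : ip y x = (ip x y)^*.
Proof. by case: hip. Qed.

Lemma ipl_linear z a x y : ip (a *: x + y) z = a * ip x z + ip y z.
Proof. by case: hip. Qed.

Lemma ip0l z : ip 0 z = 0. Proof. exact: (scal0 (ipl_linear z)). Qed.
Lemma ipDl x y z : ip (x + y) z = ip x z + ip y z.
Proof. exact: (scalD (ipl_linear z)). Qed.
Lemma ipZl a x z : ip (a *: x) z = a * ip x z.
Proof. exact: (scalZ (ipl_linear z)). Qed.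
Lemma ipBl x y z : ip (x - y) z = ip x z - ip y z.
Proof. exact: (scalB (ipl_linear z)). Qed.

Lemma ip0r z : ip z 0 = 0. Proof. by rewrite ipJ ip0l conjc0. Qed.
Lemma ipDr x y z : ip z (x + y) = ip z x + ip z y.
Proof. by rewrite ipJ ipDl rmorphD /= -!ipJ. Qed.
Lemma ipZr a x z : ip z (a *: x) = a^* * ip z x.
Proof. by rewrite ipJ ipZl rmorphM /= -ipJ. Qed.
Lemma ipBr x y z : ip z (x - y) = ip z x - ip z y.
Proof. by rewrite ipJ ipBl rmorphB /= -!ipJ. Qed.
Lemma ipNr x z : ip z (- x) = - ip z x.
Proof. by rewrite -[- x]sub0r ipBr ip0r sub0r. Qed.

Lemma hnorm2_ge0 x : 0 <= hnorm2 x.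
Proof. by case: hip => _ _ /(_ x) []. Qed.

Lemma ip_hnorm2 x : ip x x = (hnorm2 x)%:C.
Proof. by apply: complexP => //; case: hip => _ _ /(_ x) []. Qed.

Lemma hnorm2_eq0 x : hnorm2 x = 0 -> x = 0.
Proof. by move=> h; case: hip => _ _ _; apply; rewrite ip_hnorm2 h. Qed.

Lemma hnorm2_0 : hnorm2 0 = 0.
Proof. by rewrite /hnorm2 ip0l. Qed.

Lemma hnormE x : hnorm x ^+ 2 = hnorm2 x.
Proof. by rewrite /hnorm sqr_sqrtr // hnorm2_ge0. Qed.

Lemma hnorm_ge0 x : 0 <= hnorm x.
Proof. exact: sqrtr_ge0. Qed.

Lemma hnorm_lt x e : 0 < e -> (hnorm x < e) = (hnorm2 x < e ^+ 2).
Proof. by move=> e0; rewrite -hnormE ltr_pXn2r ?nnegrE ?hnorm_ge0 ?ltW. Qed.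

Lemma ip_inj_r y z : (forall x, ip x y = ip x z) -> y = z.
Proof.
move=> h; apply/eqP; rewrite -subr_eq0; apply/eqP/hnorm2_eq0.
by rewrite /hnorm2 ipBr h subrr.
Qed.

Lemma hnorm2D x y : hnorm2 (x + y) = hnorm2 x + hnorm2 y + 2 * Re (ip x y).
Proof. by rewrite /hnorm2 ipDl !ipDr (ipJ x y) !cpartsE; ring. Qed.

Lemma hnorm2B x y : hnorm2 (x - y) = hnorm2 x + hnorm2 y - 2 * Re (ip x y).
Proof. by rewrite /hnorm2 ipBl !ipBr (ipJ x y) !cpartsE; ring. Qed.

Lemma hnorm2Z a x : hnorm2 (a *: x) = sqnormc a * hnorm2 x.
Proof. by rewrite /hnorm2 ipZl ipZr ip_hnorm2 /sqnormc !cpartsE; ring. Qed.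

Lemma hnorm2N x : hnorm2 (- x) = hnorm2 x.
Proof.
by rewrite -scaleN1r hnorm2Z sqnormcN /sqnormc /= expr1n expr2 mulr0 addr0 mul1r.
Qed.

Lemma hnormB_sym x y : hnorm (x - y) = hnorm (y - x).
Proof. by rewrite /hnorm -opprB; congr Num.sqrt; exact: hnorm2N. Qed.

Lemma cauchy_schwarz x y : sqnormc (ip x y) <= hnorm2 x * hnorm2 y.
Proof.
have [y0|y_neq0] := eqVneq (hnorm2 y) 0.
  by rewrite (hnorm2_eq0 y0) ip0r hnorm2_0 mulr0 /sqnormc expr2 mulr0 addr0.
have y_gt0 : 0 < hnorm2 y by rewrite lt_def y_neq0 hnorm2_ge0.
(* 0 <= |<y,y> x - <x,y> y|^2 = <y,y> (<x,x> <y,y> - |<x,y>|^2) *)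
have := hnorm2_ge0 ((hnorm2 y)%:C *: x - ip x y *: y).
rewrite hnorm2B !hnorm2Z ipZl ipZr /sqnormc !cpartsE => h.
rewrite -subr_ge0 -(pmulr_rge0 _ y_gt0); move: h.
rewrite /hnorm2; set a := Re (ip x x); set b := Re (ip y y); nra.
Qed.

Lemma Re_ip_le x y : Re (ip x y) <= hnorm x * hnorm y.
Proof.
rewrite -[_ * _]ger0_norm ?mulr_ge0 ?hnorm_ge0 //.
apply: le_trans (ler_norm _) _; rewrite -sqrtr_sqr -[in X in _ <= X]sqrtr_sqr.
rewrite ler_sqrt ?sqr_ge0 // exprMn !hnormE.
by apply: le_trans (cauchy_schwarz x y); rewrite /sqnormc lerDl sqr_ge0.
Qed.

Lemma hnormD_le x y : hnorm (x + y) <= hnorm x + hnorm y.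
Proof.
rewrite -(ler_pXn2r (n := 2)) ?nnegrE ?addr_ge0 ?hnorm_ge0 //.
rewrite hnormE hnorm2D sqrrD !hnormE.
by have := Re_ip_le x y; rewrite mulr2n; lra.
Qed.

Lemma adjoint_linear (A As : H -> H) : is_adjoint ip A As ->
  forall a f g, As (a *: f + g) = a *: As f + As g.
Proof.
move=> adj a f g; apply: ip_inj_r => x.
by rewrite -adj ipDr ipZr ipDr ipZr -!adj.
Qed.

Lemma adjoint_bounded (A As : H -> H) (M : R) :
  is_adjoint ip A As -> (forall x, hnorm (A x) <= M * hnorm x) ->
  forall f, hnorm2 (As f) <= M ^+ 2 * hnorm2 f.
Proof.
move=> adj hM f; rewrite -!hnormE -exprMn.
have h : hnorm (As f) ^+ 2 <= M * hnorm (As f) * hnorm f.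
  rewrite hnormE /hnorm2 -adj.
  apply: le_trans (Re_ip_le _ _) _.
  by rewrite ler_wpM2r ?hnorm_ge0.
have := hnorm_ge0 (As f); have := hnorm_ge0 f.
have [-> | pos] := eqVneq (hnorm (As f)) 0; first by rewrite expr0n sqr_ge0.
nra.
Qed.

Lemma hnorm2_min_orthogonal x k :
  (forall t, hnorm2 x <= hnorm2 (x - t *: k)) -> ip x k = 0.
Proof.
move=> xmin; set c := ip x k; set s := (hnorm2 k + 1)^-1.
have k1_gt0 : 0 < hnorm2 k + 1 by rewrite ltr_wpDl ?hnorm2_ge0.
have s_gt0 : 0 < s by rewrite invr_gt0.
have sk : s * hnorm2 k < 1.
  by rewrite /s mulrC ltr_pdivrMr // mul1r ltrDl.
(* Minimality at t = s c: the cross term -2 s |c|^2 beats the quadratic one. *)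
have := xmin (s%:C * c); rewrite hnorm2B hnorm2Z ipZr -/c.
have -> : sqnormc (s%:C * c) = s ^+ 2 * sqnormc c by rewrite /sqnormc !cpartsE; ring.
have -> : Re ((s%:C * c)^* * c) = s * sqnormc c by rewrite /sqnormc !cpartsE; ring.
move=> h; apply: sqnormc_eq0; apply/eqP; rewrite eq_le sqnormc_ge0 andbT.
have : s * (sqnormc c * (2 - s * hnorm2 k)) <= 0 by move: h; set X := sqnormc c; nra.
by rewrite pmulr_rle0 // pmulr_lle0 // subr_gt0 (lt_trans sk) ?ltr1n.
Qed.

Lemma minimizing_seq_cauchy (m : R) (u : nat -> H) : 0 <= m ->
  (forall p n, m <= hnorm ((2^-1)%:C *: (u p + u n))) ->
  (forall n, hnorm (u n) < m + n.+1%:R^-1) -> hcauchy ip u.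
Proof.
move=> m0 mid_ge u_lt e e0.
set c := 8 * m + 4; have c0 : 0 < c by rewrite /c; lra.
have de0 : 0 < e ^+ 2 / c by rewrite divr_gt0 ?exprn_gt0.
have [N _ hN] := near_infty_natSinv_lt (PosNum de0).
exists N => p n Np Nn; rewrite hnorm_lt //.
have sum_ge : 4 * m ^+ 2 <= hnorm2 (u p + u n).
  have := mid_ge p n; rewrite -(ler_pXn2r (_ : (0 < 2)%N)) ?nnegrE ?hnorm_ge0 //.
  rewrite hnormE hnorm2Z.
  have -> : sqnormc (2^-1)%:C = 4^-1 :> R by rewrite /sqnormc cReC cImC; field.
  lra.
have sq_lt k : hnorm2 (u k) < (m + k.+1%:R^-1) ^+ 2.
  by rewrite -hnormE ltr_pXn2r ?nnegrE ?hnorm_ge0 ?addr_ge0 ?invr_ge0.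
have parallelogram : hnorm2 (u p - u n) = 2 * hnorm2 (u p) + 2 * hnorm2 (u n) - hnorm2 (u p + u n).
  by rewrite hnorm2B // hnorm2D //; ring.
have ce : c * (e ^+ 2 / c) = e ^+ 2 by rewrite mulrC divfK ?gt_eqF.
have := hN p Np; have := hN n Nn; have := sq_lt p; have := sq_lt n.
have a1 : p.+1%:R^-1 <= 1 :> R by rewrite invf_le1 ?ler1n.
have b1 : n.+1%:R^-1 <= 1 :> R by rewrite invf_le1 ?ler1n.
have a0 : 0 <= p.+1%:R^-1 :> R by rewrite invr_ge0.
have b0 : 0 <= n.+1%:R^-1 :> R by rewrite invr_ge0.
move: ce a1 b1 a0 b0 sum_ge; rewrite /= parallelogram /c.
set a := p.+1%:R^-1; set b := n.+1%:R^-1; set de := e ^+ 2 / _; nra.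
Qed.

Lemma hconverges_hnorm_le (u : nat -> H) l c : hconverges ip u l ->
  (forall n, hnorm (u n) < c + n.+1%:R^-1) -> hnorm l <= c.
Proof.
move=> ul u_lt; apply/ler_addgt0Pr => e e0.
have e2 : 0 < e / 2 by rewrite divr_gt0.
have [N1 _ hN1] := near_infty_natSinv_lt (PosNum e2).
have [N2 hN2] := ul _ e2.
pose n := maxn N1 N2.
have := hN1 n (leq_maxl _ _); have := hN2 n (leq_maxr _ _); have := u_lt n.
have := hnormD_le (u n) (l - u n); rewrite addrC subrK hnormB_sym /=.
set a := n.+1%:R^-1; lra.
Qed.

Section Riesz.
Variables (phi : H -> R[i]) (C : R).
Hypothesis phi_lin : forall a x y, phi (a *: x + y) = a * phi x + phi y.
Hypothesis phi_bounded : forall x, sqnormc (phi x) <= C * hnorm2 x.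

Lemma hconverges_functional_cst (u : nat -> H) l a : hconverges ip u l ->
  (forall n, phi (u n) = a) -> phi l = a.
Proof.
move=> ul ua; apply/eqP; rewrite eq_sym -subr_eq0; apply/eqP/sqnormc_eq0.
apply/eqP; rewrite eq_le sqnormc_ge0 andbT; apply/ler_addgt0Pr => e e0.
set c := `|C| + 1; have c0 : 0 < c by rewrite ltr_pwDr.
have ec0 : 0 < e / c by rewrite divr_gt0.
have [N hN] : exists N, forall n, (N <= n)%N -> hnorm (u n - l) < Num.sqrt (e / c).
  by apply: ul; rewrite sqrtr_gt0.
have small : hnorm2 (u N - l) < e / c.
  by rewrite -(sqr_sqrtr (ltW ec0)) -hnorm_lt ?sqrtr_gt0 //; exact: hN.
rewrite add0r -(ua N) -(scalB phi_lin); apply: le_trans (phi_bounded _) _.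
have := hnorm2_ge0 (u N - l); have := ler_norm C; have := normr_ge0 C.
have : c * (e / c) = e by rewrite mulrC divfK ?gt_eqF.
move: small; rewrite /c; set q := hnorm2 _; set f := e / _; nra.
Qed.

Lemma riesz_representation : hcomplete ip -> exists y, forall x, phi x = ip x y.
Proof.
move=> hcomp.
have [[z phiz]|phi0] := pselect (exists z, phi z != 0); last first.
  exists 0 => x; rewrite ip0r //; apply/eqP/negPn/negP => phix; apply: phi0.
  by exists x.
pose S := [set hnorm x | x in [set x | phi x = 1]].
have S_inf : has_inf S.
  split; first by exists (hnorm ((phi z)^-1 *: z)); exists ((phi z)^-1 *: z);
    rewrite //= (scalZ phi_lin) mulVf.
  by exists 0 => _ [x _ <-]; exact: hnorm_ge0.
pose m := inf S.
have m_le x : phi x = 1 -> m <= hnorm x by move=> hx; apply: (ge_inf S_inf.2); exists x.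
have m0 : 0 <= m by apply: (lb_le_inf S_inf.1) => _ [x _ <-]; exact: hnorm_ge0.
have minimizing n : exists x, phi x = 1 /\ hnorm x < m + n.+1%:R^-1.
  have n_gt0 : 0 < n.+1%:R^-1 :> R by rewrite invr_gt0.
  by have [_ [x hx <-] lt] := inf_adherent n_gt0 S_inf; exists x.
have [u u_spec] := choice minimizing.
have mid_ge p n : m <= hnorm ((2^-1)%:C *: (u p + u n)).
  apply: m_le; rewrite (scalZ phi_lin) (scalD phi_lin) (u_spec p).1 (u_spec n).1.
  by apply: complexP; rewrite !cpartsE /=; field.
have [x0 ux0] := hcomp u (minimizing_seq_cauchy m0 mid_ge (fun n => (u_spec n).2)).
have phix0 : phi x0 = 1 := hconverges_functional_cst ux0 (fun n => (u_spec n).1).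
have x0_le : hnorm x0 <= m := hconverges_hnorm_le ux0 (fun n => (u_spec n).2).
have x0_orth k : phi k = 0 -> ip x0 k = 0.
  move=> hk; apply: hnorm2_min_orthogonal => t.
  rewrite -!hnormE ler_pXn2r ?nnegrE ?hnorm_ge0 //.
  by apply: le_trans x0_le (m_le _ _); rewrite (scalB phi_lin) (scalZ phi_lin) hk mulr0 subr0.
have x0_neq0 : hnorm2 x0 != 0.
  apply/eqP => /hnorm2_eq0 x00; move: phix0; rewrite x00 (scal0 phi_lin) => /eqP.
  by rewrite eq_sym oner_eq0.
exists ((hnorm2 x0)^-1%:C *: x0) => x.
have := x0_orth (x - phi x *: x0).
rewrite (scalB phi_lin) (scalZ phi_lin) phix0 mulr1 subrr => /(_ erefl).
rewrite ipBr ipZr ip_hnorm2 => /eqP; rewrite subr_eq0 => /eqP h.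
rewrite ipZr (ipJ x0 x) h.
by apply: complexP; rewrite !cpartsE; field.
Qed.

End Riesz.

Lemma bounded_op_adjoint (A : H -> H) : hcomplete ip -> bounded_op ip A ->
  exists As, is_adjoint ip A As.
Proof.
move=> hcomp [A_lin [M hM]].
have A_bounded x : hnorm2 (A x) <= M ^+ 2 * hnorm2 x.
  rewrite -!hnormE -exprMn; have := hnorm_ge0 (A x).
  by move=> h; rewrite ler_pXn2r ?nnegrE ?hM //; apply: le_trans h (hM x).
have repr h : exists y, forall x, ip (A x) h = ip x y.
  apply: (@riesz_representation _ (M ^+ 2 * hnorm2 h)) => //.
    by move=> a x y; rewrite A_lin ipDl ipZl.
  move=> x; apply: le_trans (cauchy_schwarz _ _) _.
  by rewrite mulrAC ler_wpM2r ?hnorm2_ge0.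
have [As hAs] := choice repr.
by exists As => x y; rewrite hAs.
Qed.

End InnerProduct.

Section ComplexIntegration.
Context {d : measure_display} {T : measurableType d} {R : realType}.
Variable mu : {measure set T -> \bar R}.
Local Notation Re := complex.Re.
Local Notation Im := complex.Im.
Implicit Types f g : T -> R[i].

Lemma cmeasurableD f g : cmeasurable f -> cmeasurable g ->
  cmeasurable (fun w => f w + g w).
Proof.
move=> [f1 f2] [g1 g2]; split.
  by under eq_fun do rewrite cReD; exact: measurable_funD.
by under eq_fun do rewrite cImD; exact: measurable_funD.
Qed.

Lemma cmeasurableN f : cmeasurable f -> cmeasurable (fun w => - f w).
Proof.
move=> [f1 f2]; split.
  by under eq_fun do rewrite cReN; exact: measurable_funN.
by under eq_fun do rewrite cImN; exact: measurable_funN.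
Qed.

Lemma cmeasurableM f g : cmeasurable f -> cmeasurable g ->
  cmeasurable (fun w => f w * g w).
Proof.
move=> [f1 f2] [g1 g2]; split.
  by under eq_fun do rewrite cReM; apply: measurable_funB; exact: measurable_funM.
by under eq_fun do rewrite cImM; apply: measurable_funD; exact: measurable_funM.
Qed.

Lemma cmeasurableJ f : cmeasurable f -> cmeasurable (fun w => (f w)^*).
Proof.
move=> [f1 f2]; split; first by under eq_fun do rewrite cReJ.
by under eq_fun do rewrite cImJ; exact: measurable_funN.
Qed.

Lemma measurable_sqnormc f : cmeasurable f ->
  measurable_fun setT (fun w => sqnormc (f w)).
Proof. by move=> [f1 f2]; apply: measurable_funD; exact: measurable_funX. Qed.

Lemma L2c_integrable f : L2c mu f ->
  mu.-integrable setT (EFin \o (fun w => sqnormc (f w))).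
Proof.
move=> [mf f_fin]; apply/integrableP; split.
  by apply/measurable_EFinP; exact: measurable_sqnormc.
rewrite (eq_integral (fun w => (sqnormc (f w))%:E)) //.
by move=> w _; rewrite /comp abse_EFin ger0_norm ?sqnormc_ge0.
Qed.

Lemma L2cJ f : L2c mu f -> L2c mu (fun w => (f w)^*).
Proof.
move=> [mf f_fin]; split; first exact: cmeasurableJ.
by rewrite /csq_integral; under eq_integral do rewrite cReJ cImJ sqrrN.
Qed.

Lemma csq_integralN f : csq_integral mu (fun w => - f w) = csq_integral mu f.
Proof. by rewrite /csq_integral; under eq_integral do rewrite cReN cImN !sqrrN. Qed.

Lemma csq_integralD_le f g : cmeasurable f -> cmeasurable g ->
  (csq_integral mu (fun w => (f w + g w)%R) <=
   2%:E * csq_integral mu f + 2%:E * csq_integral mu g)%E.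
Proof.
move=> mf mg.
have sq_ge0 (h : T -> R[i]) w : (0 <= (sqnormc (h w))%:E)%E by rewrite lee_fin sqnormc_ge0.
have sq2_ge0 (h : T -> R[i]) w : setT w -> (0 <= (2 * sqnormc (h w))%:E)%E.
  by rewrite lee_fin mulr_ge0 ?sqnormc_ge0.
have msq (h : T -> R[i]) : cmeasurable h -> measurable_fun setT (EFin \o (fun w => sqnormc (h w))).
  by move=> mh; apply/measurable_EFinP; exact: measurable_sqnormc.
have msq2 (h : T -> R[i]) : cmeasurable h -> measurable_fun setT (fun w => (2 * sqnormc (h w))%:E).
  by move=> mh; apply/measurable_EFinP; apply: measurable_funM => //; exact: measurable_sqnormc.
have int2 (h : T -> R[i]) : cmeasurable h ->
    (\int[mu]_w (2 * sqnormc (h w))%:E = 2%:E * csq_integral mu h)%E.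
  by move=> mh; rewrite -(ge0_integralZl_EFin mu measurableT (fun w _ => sq_ge0 h w) (msq h mh)).
rewrite -(int2 f mf) -(int2 g mg).
rewrite -(ge0_integralD mu measurableT (sq2_ge0 f) (msq2 f mf) (sq2_ge0 g) (msq2 g mg)).
apply: ge0_le_integral => //.
- by move=> w _; exact: (sq_ge0 (fun w => f w + g w)).
- exact: (msq _ (cmeasurableD mf mg)).
- exact: emeasurable_funD (msq2 f mf) (msq2 g mg).
by move=> w _; rewrite -EFinD lee_fin; exact: sqnormcD_le.
Qed.

Lemma csq_integral_eq0 f : cmeasurable f -> csq_integral mu f = 0%E ->
  {ae mu, forall w, f w = 0}.
Proof.
move=> mf f0.
have : ae_eq mu setT (fun w => (sqnormc (f w))%:E) (cst 0%E).
  apply/ae_eq_integral_abs => //; first by apply/measurable_EFinP; exact: measurable_sqnormc.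
  by rewrite -f0; apply: eq_integral => w _; rewrite abse_EFin ger0_norm ?sqnormc_ge0.
by apply: filterS => w /(_ I) [] /sqnormc_eq0.
Qed.

Definition cintegrable f :=
  mu.-integrable setT (EFin \o (fun w => Re (f w))) /\
  mu.-integrable setT (EFin \o (fun w => Im (f w))).

Lemma L2c_cintegrableM f g : L2c mu f -> L2c mu g -> cintegrable (fun w => f w * g w).
Proof.
move=> L2f L2g; have [m1 m2] := cmeasurableM L2f.1 L2g.1.
have sum_int := integrableD measurableT (L2c_integrable L2f) (L2c_integrable L2g).
split; (apply: le_integrable sum_int => //; first exact/measurable_EFinP);
  move=> w _; rewrite /comp !abse_EFin lee_fin [X in _ <= X]ger0_norm ?addr_ge0 ?sqr_ge0 //.
- exact: cReM_le.
- exact: cImM_le.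
Qed.

Lemma cintegralD f g : cintegrable f -> cintegrable g ->
  cintegral mu (fun w => f w + g w) = cintegral mu f + cintegral mu g.
Proof.
move=> [f1 f2] [g1 g2]; apply: complexP; rewrite ?cReD ?cImD /= -RintegralD //;
  by apply: eq_Rintegral => w _; rewrite ?cReD ?cImD.
Qed.

Lemma cintegralB f g : cintegrable f -> cintegrable g ->
  cintegral mu (fun w => f w - g w) = cintegral mu f - cintegral mu g.
Proof.
move=> [f1 f2] [g1 g2]; apply: complexP; rewrite ?(cReD, cReN, cImD, cImN) /= -RintegralB //;
  by apply: eq_Rintegral => w _; rewrite ?(cReD, cReN, cImD, cImN).
Qed.

Lemma cintegral_ae f g : cmeasurable f -> cmeasurable g ->
  {ae mu, forall w, f w = g w} -> cintegral mu f = cintegral mu g.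
Proof.
move=> [f1 f2] [g1 g2] fg; rewrite /cintegral /Rintegral.
by congr (Complex (fine _) (fine _)); apply: ae_eq_integral => //;
  do ?[exact/measurable_EFinP]; apply: filterS fg => w /= ->.
Qed.

Lemma Rintegral_sqnormc_polar f g : L2c mu f -> L2c mu g ->
  Rintegral mu setT (fun w => 4^-1 * (sqnormc (f w) - sqnormc (g w))) =
  4^-1 * (fine (csq_integral mu f) - fine (csq_integral mu g)).
Proof.
move=> L2f L2g; rewrite RintegralZl //; first by rewrite RintegralB // L2c_integrable.
exact: eq_integrable (integrableB measurableT (L2c_integrable L2f) (L2c_integrable L2g)).
Qed.

End ComplexIntegration.

Section BesselSequences.
Context {d : measure_display} {T : measurableType d} {R : realType}.
Variables (mu : {measure set T -> \bar R}) (H : lmodType R[i]) (ip : H -> H -> R[i]).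
Hypothesis hip : is_inner_product ip.
Local Notation Re := complex.Re.
Implicit Types (E G : T -> H) (f g : H).

Lemma weakly_measurable_r E g : weakly_measurable ip E -> cmeasurable (fun w => ip (E w) g).
Proof. by move=> mE; under eq_fun do rewrite (ipJ hip); exact: cmeasurableJ. Qed.

Lemma cont_bessel_L2c G f : cont_bessel mu ip G -> L2c mu (fun w => ip f (G w)).
Proof.
by move=> [mG [B [_ hB]]]; split; [exact: mG | apply: le_lt_trans (hB f) _; rewrite ltry].
Qed.

Lemma cont_bessel_L2c_r G h : cont_bessel mu ip G -> L2c mu (fun w => ip (G w) h).
Proof.
move=> bG; have -> : (fun w => ip (G w) h) = fun w => (ip h (G w))^*.
  by apply: funext => w; rewrite (ipJ hip).
exact/L2cJ/cont_bessel_L2c.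
Qed.

Lemma cont_besselD G1 G2 : cont_bessel mu ip G1 -> cont_bessel mu ip G2 ->
  cont_bessel mu ip (fun w => G1 w + G2 w).
Proof.
move=> [mG1 [B1 [B1_gt0 hB1]]] [mG2 [B2 [B2_gt0 hB2]]].
split=> [f|]; first by under eq_fun do rewrite (ipDr hip); exact: cmeasurableD.
exists (2 * (B1 + B2)); split=> [|f]; first by rewrite mulr_gt0 ?addr_gt0.
under eq_fun do rewrite (ipDr hip).
apply: le_trans (csq_integralD_le mu (mG1 f) (mG2 f)) _.
have -> : 2 * (B1 + B2) * hnorm ip f ^+ 2 =
    2 * (B1 * hnorm ip f ^+ 2) + 2 * (B2 * hnorm ip f ^+ 2) by ring.
by rewrite [X in (_ <= X)%E]EFinD !(EFinM 2); apply: leeD; apply: lee_wpmul2l.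
Qed.

Lemma cont_besselN G : cont_bessel mu ip G -> cont_bessel mu ip (fun w => - G w).
Proof.
move=> [mG [B [B_gt0 hB]]].
split=> [f|]; first by under eq_fun do rewrite (ipNr hip); exact: cmeasurableN.
by exists B; split=> // f; under eq_fun do rewrite (ipNr hip); rewrite csq_integralN.
Qed.

Lemma parseval_polarization (A : H -> H) F :
  (forall a f g, A (a *: f + g) = a *: A f + A g) ->
  parseval_cont_Kframe mu ip A F ->
  forall f g, cintegral mu (fun w => ip f (F w) * ip (F w) g) = ip (A f) (A g).
Proof.
move=> A_lin [mF parF] f g.
have L2F p : L2c mu (fun w => ip p (F w)) by split; [exact: mF | rewrite parF ltry].
have normA p : fine (csq_integral mu (fun w => ip p (F w))) = hnorm2 ip (A p).
  by rewrite parF /= hnormE.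
have polarRe p q : Re (cintegral mu (fun w => ip p (F w) * ip (F w) q)) = Re (ip (A p) (A q)).
  rewrite /cintegral /=.
  under eq_Rintegral do rewrite (ipJ hip q) cReMJ_polar -(ipDl hip) -(ipBl hip).
  rewrite Rintegral_sqnormc_polar // !normA (linD A_lin) (linB A_lin).
  by rewrite (hnorm2D hip) (hnorm2B hip); field.
apply: complexP; first exact: polarRe.
rewrite -[RHS]cRe_mulJi -(ipZr hip) -(linZ A_lin) -polarRe /cintegral /=.
by apply: eq_Rintegral => w _; rewrite (ipZr hip) mulrCA cRe_mulJi.
Qed.

End BesselSequences.

Section ParsevalKFrame.
Context {d : measure_display} {T : measurableType d} {R : realType}.
Variables (mu : {measure set T -> \bar R}) (H : lmodType R[i]) (ip : H -> H -> R[i]).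
Variables (K Ks Kd Kds : H -> H) (F : T -> H).
Hypotheses (hip : is_inner_product ip) (adjK : is_adjoint ip K Ks).
Hypotheses (adjKd : is_adjoint ip Kd Kds) (pinvKd : is_MP_inverse ip K Kd).
Hypothesis frameF : parseval_cont_Kframe mu ip Ks F.

Lemma Ks_K_Kd g : Ks (K (Kd g)) = Ks g.
Proof.
case: pinvKd => _ KKdK _ sa_KKd _; apply: (ip_inj_r hip) => x.
by rewrite -!adjK; have := sa_KKd (K x) g; rewrite /= KKdK => <-.
Qed.

Lemma Kd_K_Ks y : Kd (K (Ks y)) = Ks y.
Proof.
case: pinvKd => _ KKdK _ _ sa_KdK; apply: (ip_inj_r hip) => x.
by have /= <- := sa_KdK x (Ks y); rewrite -!adjK KKdK.
Qed.

Lemma ip_Kd_Ks x h : ip (Kd x) (Ks h) = ip x (K (Kd h)).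
Proof. by case: pinvKd => _ _ _ sa_KKd _; rewrite -adjK; exact: sa_KKd. Qed.

Lemma frame_ae_range g : {ae mu, forall w, ip (F w) g = ip (F w) (K (Kd g))}.
Proof.
case: frameF => mF parF.
have : csq_integral mu (fun w => ip (g - K (Kd g)) (F w)) = 0%E.
  by rewrite parF (linB (adjoint_linear hip adjK)) Ks_K_Kd subrr (hnormE hip) (hnorm2_0 hip).
move/(csq_integral_eq0 (mF _)); apply: filterS => w.
rewrite (ipBl hip) => /eqP; rewrite subr_eq0 => /eqP gKKd.
by rewrite (ipJ hip g) (ipJ hip (K (Kd g))) gKKd.
Qed.

Lemma cintegral_frame_Kd (a : T -> R[i]) h : cmeasurable a ->
  cintegral mu (fun w => a w * ip (F w) h) = cintegral mu (fun w => a w * ip (Kd (F w)) (Ks h)).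
Proof.
case: frameF => mF _ ma.
have -> : (fun w => a w * ip (Kd (F w)) (Ks h)) = fun w => a w * ip (F w) (K (Kd h)).
  by apply: funext => w; rewrite ip_Kd_Ks.
apply: cintegral_ae; try exact: cmeasurableM ma (weakly_measurable_r hip _ mF).
by apply: filterS (frame_ae_range h) => w ->.
Qed.

Lemma cont_L2_independent_Kd :
  cont_L2_independent mu ip F <-> cont_L2_independent mu ip (fun w => Kd (F w)).
Proof.
split=> indep phi L2phi phi_int; apply: indep => // g.
  by rewrite cintegral_frame_Kd ?phi_int //; case: L2phi.
have -> : (fun w => phi w * ip (Kd (F w)) g) = fun w => phi w * ip (F w) (Kds g).
  by apply: funext => w; rewrite adjKd.
exact: phi_int.
Qed.

Lemma frame_dual_Kd (M : R) : (forall x, hnorm ip (K x) <= M * hnorm ip x) ->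
  dual_cont_bessel mu ip Ks (fun w => Kd (F w)) F.
Proof.
move=> hM; case: (frameF) => mF parF; split.
  split=> //; exists (M ^+ 2 + 1); split=> [|f]; first by rewrite ltr_pwDr ?sqr_ge0.
  rewrite parF lee_fin !(hnormE hip); apply: le_trans (adjoint_bounded hip adjK hM f) _.
  by rewrite ler_wpM2r ?hnorm2_ge0 // lerDl.
move=> f h; have -> : (fun w => ip f (F w) * ip (Kd (F w)) h) =
    fun w => ip f (F w) * ip (F w) (Kds h) by apply: funext => w; rewrite adjKd.
by rewrite (parseval_polarization hip (adjoint_linear hip adjK) frameF) -adjK -adjKd Kd_K_Ks.
Qed.

Lemma dual_Kd_cintegral G f h : dual_cont_bessel mu ip Ks (fun w => Kd (F w)) G ->
  cintegral mu (fun w => ip f (G w) * ip (F w) h) = ip (Ks f) (Ks h).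
Proof. by move=> [[mG _] dualG]; rewrite cintegral_frame_Kd // dualG. Qed.

Lemma unique_dual_Kd : (exists M, forall x, hnorm ip (K x) <= M * hnorm ip x) ->
  unique_dual_cont_bessel mu ip K F ->
  unique_dual_cont_bessel mu ip Ks (fun w => Kd (F w)).
Proof.
move=> [M hM] [[G [besselG dualG]] uniqF]; split; first by exists F; exact: frame_dual_Kd hM.
move=> G1 G2 dual1 dual2; pose D w := G1 w - G2 w.
have besselD : cont_bessel mu ip D := cont_besselD hip dual1.1 (cont_besselN hip dual2.1).
have L2G1 f := cont_bessel_L2c f dual1.1; have L2G2 f := cont_bessel_L2c f dual2.1.
have L2F h := cont_bessel_L2c_r hip h (frame_dual_Kd hM).1.
have D_null f h : cintegral mu (fun w => ip f (D w) * ip (F w) h) = 0.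
  have -> : (fun w => ip f (D w) * ip (F w) h) =
      fun w => ip f (G1 w) * ip (F w) h - ip f (G2 w) * ip (F w) h.
    by apply: funext => w; rewrite (ipBr hip) mulrBl.
  by rewrite cintegralB ?(dual_Kd_cintegral _ _ dual1) ?(dual_Kd_cintegral _ _ dual2) ?subrr //;
    apply: L2c_cintegrableM.
have dualGD : dual_cont_bessel mu ip K F (fun w => G w + D w).
  split=> [|f h]; first by apply: (cont_besselD hip besselG besselD).
  have -> : (fun w => ip f (G w + D w) * ip (F w) h) =
      fun w => ip f (G w) * ip (F w) h + ip f (D w) * ip (F w) h.
    by apply: funext => w; rewrite (ipDr hip) mulrDl.
  rewrite cintegralD ?D_null ?addr0 -?dualG //; apply: L2c_cintegrableM => //;
    exact: cont_bessel_L2c.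
apply: filterS (uniqF _ _ (conj besselG dualG) dualGD) => w GGD.
apply/eqP; rewrite -subr_eq0 -/(D w); apply/eqP/(addrI (G w)).
by rewrite addr0 -GGD.
Qed.

End ParsevalKFrame.

Local Close Scope complex_scope.
Unset Implicit Arguments.

Theorem theorem3p8 (R : realType) (H : lmodType R[i]) (ip : H -> H -> R[i])
  (d : measure_display) (T : measurableType d) (mu : {measure set T -> \bar R})
  (K Ks Kd : H -> H) (F : T -> H) :
  separable_hilbert_space ip ->
  bounded_op ip K -> closed_range ip K ->
  is_adjoint ip K Ks ->
  is_MP_inverse ip K Kd ->
  parseval_cont_Kframe mu ip Ks F ->
  (cont_L2_independent mu ip F <-> cont_L2_independent mu ip (fun w => Kd (F w))) /\
  (unique_dual_cont_bessel mu ip K F ->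
   unique_dual_cont_bessel mu ip Ks (fun w => Kd (F w))).
Proof.
move=> [hip hcomp _] [_ K_bounded] _ adjK pinvKd frameF.
have [Kds adjKd] : exists Kds, is_adjoint ip Kd Kds.
  by case: (pinvKd) => Kd_bounded _ _ _ _; apply: (bounded_op_adjoint hip hcomp Kd_bounded).
split; first exact: cont_L2_independent_Kd hip adjK adjKd pinvKd frameF.
exact: unique_dual_Kd hip adjK adjKd pinvKd frameF K_bounded.
Qed.
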